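(* Let $\Sigma$ be a signature, $V$ a set of variables, and $t_1=t_2$ a one-drop equation with $t_1,t_2\in\Sigma^*V$ and $\mathrm{Var}(t_1)\cup\mathrm{Var}(t_2)=V$. Let $T$ be a monoidal monad on $\mathbf{Set}$. If $T$ preserves $t_1=t_2$, then $T$ is affine.
   Context: All monads are on $\mathbf{Set}$ with its Cartesian monoidal structure. A monoidal monad is a monad $(T,\eta,\mu)$ with a natural transformation $\psi_{X,Y}\colon TX\times TY\to T(X\times Y)$ making $T$ lax monoidal with unit $\psi^0=\eta_1$, such that $\eta,\mu$ are monoidal natural transformations (equivalently, a commutative monad with its double strength). $\psi^n$ denotes the $n$-ary version built associatively from $\psi$ ($\psi^1=\mathrm{id}$, $\psi^0=\eta_1$). $\Sigma^*V$ is the set of $\Sigma$-terms over variables $V$, $\mathrm{Var}(t)$ the variables occurring in $t$. For a $\Sigma$-algebra $\mathcal A$ with carrier $A$, the lifted algebra $\widehat T\mathcal A$ has carrier $TA$ and operations $\sigma_{\widehat T\mathcal A}=T\sigma_{\mathcal A}\circ\psi^{\mathrm{ar}(\sigma)}$. $T$ preserves $t_1=t_2$ if for every $\Sigma$-algebra $\mathcal A$ with $\mathcal A\models t_1=t_2$ we have $\widehat T\mathcal A\models t_1=t_2$. $T$ is affine if $T1$ is a one-element set (equivalently $\langle T\pi_1,T\pi_2\rangle\circ\psi_{A,B}=\mathrm{id}_{TA\times TB}$ for all $A,B$). An equation is one-drop if some variable occurs exactly once on one side and does not occur on the other side. *)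

From Stdlib Require Import Fin.

Set Implicit Arguments.

(** * Cartesian powers, right-nested: A^0 = 1, A^1 = A, A^(n+2) = A * A^(n+1) *)
Fixpoint power1 (A : Type) (n : nat) : Type :=
  match n with
  | 0 => A
  | S m => (A * power1 A m)%type
  end.

Definition power (A : Type) (n : nat) : Type :=
  match n with
  | 0 => unit
  | S m => power1 A m
  end.

Fixpoint tup1 (A : Type) (n : nat) : (Fin.t (S n) -> A) -> power1 A n :=
  match n return (Fin.t (S n) -> A) -> power1 A n with
  | 0 => fun f => f Fin.F1
  | S m => fun f => (f Fin.F1, @tup1 A m (fun i => f (Fin.FS i)))
  end.

Definition tup (A : Type) (n : nat) : (Fin.t n -> A) -> power A n :=
  match n return (Fin.t n -> A) -> power A n with
  | 0 => fun _ => tt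
  | S m => fun f => @tup1 A m f
  end.

Record MonoidalMonad := {
  T :> Type -> Type;
  fmap : forall (A B : Type), (A -> B) -> T A -> T B;
  eta : forall (A : Type), A -> T A;
  mu : forall (A : Type), T (T A) -> T A;
  psi : forall (A B : Type), (T A * T B)%type -> T (A * B);
  fmap_id : forall A (x : T A), fmap (fun a => a) x = x;
  fmap_comp : forall A B C (f : A -> B) (g : B -> C) (x : T A),
      fmap g (fmap f x) = fmap (fun a => g (f a)) x;
  eta_nat : forall A B (f : A -> B) (a : A), fmap f (eta a) = eta (f a);
  mu_nat : forall A B (f : A -> B) (x : T (T A)),
      fmap f (mu x) = mu (fmap (fmap f) x);
  mu_eta_l : forall A (x : T A), mu (eta x) = x;
  mu_eta_r : forall A (x : T A), mu (fmap (@eta A) x) = x;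
  mu_assoc : forall A (x : T (T (T A))), mu (mu x) = mu (fmap (@mu A) x);
  psi_nat : forall A A' B B' (f : A -> A') (g : B -> B') (x : T A) (y : T B),
      psi (fmap f x, fmap g y) = fmap (fun p => (f (fst p), g (snd p))) (psi (x, y));
  (* lax monoidal: associativity and unit laws, with psi^0 = eta_1 *)
  psi_assoc : forall A B C (x : T A) (y : T B) (z : T C),
      fmap (fun p => (fst (fst p), (snd (fst p), snd p))) (psi (psi (x, y), z))
      = psi (x, psi (y, z));
  psi_unit_l : forall A (x : T A), fmap (@snd unit A) (psi (eta tt, x)) = x;
  psi_unit_r : forall A (x : T A), fmap (@fst A unit) (psi (x, eta tt)) = x;
  eta_monoidal : forall A B (a : A) (b : B), psi (eta a, eta b) = eta (a, b);
  mu_monoidal : forall A B (x : T (T A)) (y : T (T B)),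
      psi (mu x, mu y) = mu (fmap (@psi A B) (psi (x, y)))
}.

Arguments fmap {_ _ _} _ _.
Arguments eta {_ _} _.
Arguments mu {_ _} _.
Arguments psi {_ _ _} _.

Fixpoint psi1 (M : MonoidalMonad) (A : Type) (n : nat)
  : power1 (M A) n -> M (power1 A n) :=
  match n return power1 (M A) n -> M (power1 A n) with
  | 0 => fun x => x
  | S m => fun p => psi (fst p, @psi1 M A m (snd p))
  end.

Definition psin (M : MonoidalMonad) (A : Type) (n : nat)
  : power (M A) n -> M (power A n) :=
  match n return power (M A) n -> M (power A n) with
  | 0 => fun _ => @eta M unit tt
  | S m => psi1 M A m
  end.

Record signature := { op_sym : Type; arity : op_sym -> nat }.

Inductive term (S : signature) (V : Type) : Type :=
  | tvar : V -> term S V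
  | tapp : forall o : op_sym S, (Fin.t (arity S o) -> term S V) -> term S V.

Arguments tvar {S V} _.
Arguments tapp {S V} _ _.

Inductive at_pos (S : signature) (V : Type) : term S V -> list nat -> V -> Prop :=
  | at_var : forall v, at_pos (tvar v) nil v
  | at_app : forall o args (i : Fin.t (arity S o)) p v,
      at_pos (args i) p v ->
      at_pos (tapp o args) (proj1_sig (Fin.to_nat i) :: p) v.

Definition occurs (S : signature) (V : Type) (v : V) (t : term S V) : Prop :=
  exists p, at_pos t p v.

Definition occurs_once (S : signature) (V : Type) (v : V) (t : term S V) : Prop :=
  exists p, at_pos t p v /\ forall q, at_pos t q v -> q = p.

Definition one_drop (S : signature) (V : Type) (t1 t2 : term S V) : Prop :=
  exists v, (occurs_once v t1 /\ ~ occurs v t2) \/ (occurs_once v t2 /\ ~ occurs v t1).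

Record algebra (S : signature) := {
  carrier : Type;
  op : forall o : op_sym S, power carrier (arity S o) -> carrier
}.

Arguments op {S} _ _ _.

Fixpoint eval (S : signature) (V : Type) (A : algebra S) (env : V -> carrier A)
  (t : term S V) : carrier A :=
  match t with
  | tvar v => env v
  | tapp o args => op A o (@tup _ (arity S o) (fun i => eval A env (args i)))
  end.

Definition models (S : signature) (V : Type) (A : algebra S) (t1 t2 : term S V) : Prop :=
  forall env : V -> carrier A, eval A env t1 = eval A env t2.

Definition lift_alg (M : MonoidalMonad) (S : signature) (A : algebra S) : algebra S :=
  {| carrier := M (carrier A);
     op := fun o xs => fmap (op A o) (psin M (carrier A) (arity S o) xs) |}.

Definition preserves (M : MonoidalMonad) (S : signature) (V : Type) (t1 t2 : term S V) : Prop :=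
  forall A : algebra S, models A t1 t2 -> models (lift_alg M A) t1 t2.

Definition affine (M : MonoidalMonad) : Prop :=
  exists x : M unit, forall y : M unit, y = x.

(* The one-element algebra satisfies every equation, so T preserving t1 = t2
   makes the lifted algebra on T1 satisfy it too.  Evaluate both sides in the
   environment sending the dropped variable v to an arbitrary y : T1 and every
   other variable to eta tt.  Since psi of eta's is eta, a term without v
   evaluates to eta tt; a term with a single occurrence of v collapses, by the
   unit laws of psi, to y.  Hence y = eta tt. *)

From Stdlib Require Import Fin FunctionalExtensionality ClassicalEpsilon.

Set Implicit Arguments.

Section PsiOnUnit.
Variable M : MonoidalMonad.

Lemma fmap_const_tt (x : M unit) : fmap (fun _ : unit => tt) x = x.
Proof.
  replace (fun _ : unit => tt) with (fun a : unit => a)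
    by (extensionality a; now destruct a).
  apply fmap_id.
Qed.

Lemma psi1_eta (A : Type) (k : nat) (f : Fin.t (S k) -> A) :
  psi1 M A k (tup1 (fun i => eta (f i))) = eta (tup1 f).
Proof.
  induction k as [|k IH]; simpl; [reflexivity|].
  rewrite (IH (fun i => f (Fin.FS i))). apply eta_monoidal.
Qed.

Lemma psin_eta (A : Type) (n : nat) (f : Fin.t n -> A) :
  psin M A n (tup (fun i => eta (f i))) = eta (tup f).
Proof. destruct n; [reflexivity|]. apply psi1_eta. Qed.

Lemma psi_eta_r_unit (B : Type) (x : M unit) (b : B) :
  fmap (fun _ : unit * B => tt) (psi (x, eta b)) = x.
Proof.
  rewrite <- (eta_nat M (fun _ : unit => b) tt), <- (fmap_id M _ x) at 1.
  rewrite psi_nat, fmap_comp.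
  rewrite <- (psi_unit_r M _ x) at 2.
  f_equal. extensionality p. now destruct p as [[] []].
Qed.

Lemma psi_eta_l_unit (B : Type) (y : M B) :
  fmap (fun _ : unit * B => tt) (psi (eta tt, y)) = fmap (fun _ : B => tt) y.
Proof.
  rewrite <- (psi_unit_l M _ y) at 2. now rewrite fmap_comp.
Qed.

Lemma psin_collapse_eta (n : nat) (f : Fin.t n -> M unit) :
  (forall j, f j = eta tt) ->
  fmap (fun _ : power unit n => tt) (psin M unit n (tup f)) = eta tt.
Proof.
  intros Hf.
  replace f with (fun j : Fin.t n => @eta M unit tt)
    by (extensionality j; now rewrite Hf).
  rewrite (psin_eta (fun _ : Fin.t n => tt)). apply eta_nat.
Qed.

Lemma psi1_collapse_single (k : nat) (f : Fin.t (S k) -> M unit) i (x : M unit) :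
  f i = x -> (forall j, j <> i -> f j = eta tt) ->
  fmap (fun _ : power1 unit k => tt) (psi1 M unit k (tup1 f)) = x.
Proof.
  revert f i. induction k as [|k IH]; intros f i Hi Hj; simpl.
  - revert f Hi Hj. pattern i. apply Fin.caseS'; [|intro p; inversion p].
    intros f Hi _. rewrite Hi. apply fmap_const_tt.
  - revert f Hi Hj. pattern i. apply Fin.caseS'.
    + intros f Hi Hj. rewrite <- Hi.
      replace (fun j => f (Fin.FS j)) with (fun j : Fin.t (S k) => @eta M unit tt)
        by (extensionality j; symmetry; apply Hj; discriminate).
      rewrite (psi1_eta (fun _ : Fin.t (S k) => tt)). apply psi_eta_r_unit.
    + intros p f Hi Hj.
      rewrite (Hj Fin.F1) by discriminate.
      rewrite psi_eta_l_unit.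
      apply (IH _ p); [exact Hi|].
      intros j Hne. apply Hj. intro E. apply Hne. now apply Fin.FS_inj.
Qed.

Lemma psin_collapse_single (n : nat) (f : Fin.t n -> M unit) i (x : M unit) :
  f i = x -> (forall j, j <> i -> f j = eta tt) ->
  fmap (fun _ : power unit n => tt) (psin M unit n (tup f)) = x.
Proof. destruct n; [inversion i|]. apply psi1_collapse_single. Qed.

End PsiOnUnit.

Definition unit_alg (Sig : signature) : algebra Sig :=
  {| carrier := unit; op := fun _ _ => tt |}.

Lemma unit_alg_models (Sig : signature) (V : Type) (t1 t2 : term Sig V) :
  models (unit_alg Sig) t1 t2.
Proof.
  intros env. now destruct (eval (unit_alg Sig) env t1), (eval (unit_alg Sig) env t2).
Qed.

Section PointEnvironment.
Variables (Sig : signature) (V : Type) (M : MonoidalMonad) (v : V) (x : M unit).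

Definition point_env (w : V) : M unit :=
  if excluded_middle_informative (w = v) then x else eta tt.

Lemma eval_point_env_not_occurs (t : term Sig V) :
  ~ occurs v t -> eval (lift_alg M (unit_alg Sig)) point_env t = eta tt.
Proof.
  induction t as [w|o args IH]; intros Hn; simpl.
  - unfold point_env. destruct (excluded_middle_informative (w = v)) as [->|]; auto.
    exfalso. apply Hn. exists nil. constructor.
  - apply psin_collapse_eta. intros j. apply IH. intros [p Hp]. apply Hn.
    eexists. econstructor. exact Hp.
Qed.

Lemma eval_point_env_occurs_once (t : term Sig V) :
  occurs_once v t -> eval (lift_alg M (unit_alg Sig)) point_env t = x.
Proof.
  intros [p [Hp Huniq]]. remember v as w eqn:Ew.
  induction Hp as [w|o args i p w Hp IH]; simpl; subst w.
  - unfold point_env. destruct (excluded_middle_informative (v = v)); congruence.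
  - apply (@psin_collapse_single M _ _ i).
    + apply IH; [reflexivity|]. intros q Hq.
      now injection (Huniq _ (at_app o args i Hq)).
    + intros j Hne. apply eval_point_env_not_occurs. intros [q Hq].
      injection (Huniq _ (at_app o args j Hq)) as Eij _.
      apply Hne. now apply Fin.to_nat_inj.
Qed.

End PointEnvironment.

Lemma lift_unit_alg_one_drop_trivial (Sig : signature) (V : Type) (M : MonoidalMonad)
  (t1 t2 : term Sig V) (v : V) :
  occurs_once v t1 -> ~ occurs v t2 -> models (lift_alg M (unit_alg Sig)) t1 t2 ->
  forall y : M unit, y = eta tt.
Proof.
  intros Honce Hnot Hmod y.
  specialize (Hmod (point_env M v y)).
  now rewrite (eval_point_env_occurs_once M y Honce), (eval_point_env_not_occurs M y Hnot) in Hmod.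
Qed.

Theorem theorem4 (S : signature) (V : Type) (t1 t2 : term S V)
  (Hdrop : one_drop t1 t2)
  (Hvars : forall v : V, occurs v t1 \/ occurs v t2)
  (M : MonoidalMonad)
  (Hpres : preserves M t1 t2) :
  affine M.
Proof.
  exists (eta tt).
  pose proof (Hpres _ (unit_alg_models t1 t2)) as Hlift.
  destruct Hdrop as [v [[Honce Hnot] | [Honce Hnot]]].
  - exact (lift_unit_alg_one_drop_trivial Honce Hnot Hlift).
  - apply (lift_unit_alg_one_drop_trivial Honce Hnot).
    intros env. symmetry. apply Hlift.
Qed.
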